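(* Let $q=p^{m_0}$ with $p$ prime, let $L$ be a finite extension of $\mathbb{F}_q((1/\theta))$ with ring of integers $\mathcal O$, and let $\rho$ be a permutation of $\{0,1,2,\ldots\}$. For every nonnegative integer $j$, as functions from $\mathbb{Z}_p$ to $\mathcal O$ we have $$\binom{y}{j}^{\rho_1}=\binom{y}{\rho_\ast j},$$ i.e. $\binom{\rho_\ast^{-1}y}{j}=\binom{y}{\rho_\ast j}$ for all $y\in\mathbb{Z}_p$.
   Context: For $y\in\mathbb{Z}_p$ written $q$-adically as $y=\sum_{j\ge0}c_jq^j$ with $0\le c_j<q$, set $\rho_\ast y:=\sum_{j\ge0}c_jq^{\rho(j)}$; this is a bijection (indeed homeomorphism) of $\mathbb{Z}_p$ stabilizing the nonnegative integers, with inverse $(\rho^{-1})_\ast$. For $y\in\mathbb{Z}_p$ and a nonnegative integer $j$, $\binom{y}{j}\in\mathbb{Z}_p$ is the usual binomial coefficient, viewed in $\mathcal O$ via reduction modulo $p$ (as $\mathbb{F}_p\subset\mathcal O$). For a continuous $f:\mathbb{Z}_p\to\mathcal O$, define $f^{\rho_1}(y):=f(\rho_\ast^{-1}y)$. *)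

From HB Require Import structures.
From mathcomp Require Import all_boot all_algebra.
From Stdlib Require Import ClassicalEpsilon.
Set Implicit Arguments. Unset Strict Implicit. Unset Printing Implicit Defensive.
Import GRing.Theory.

(* An element y of Z_p is represented by its q-adic digit sequence
   y = \sum_j c_j q^j, 0 <= c_j < q  (q = p^m0); this is a bijection
   between Z_p and nat -> 'I_q. *)
Definition Zpq (q : nat) := nat -> 'I_q.

Definition trunc (q : nat) (y : Zpq q) (n : nat) : nat :=
  \sum_(k < n) (y k : nat) * q ^ k.

(* sigma_* y for a bijection sigma of nat with inverse sigma_inv:
   sigma_* (\sum c_j q^j) = \sum c_j q^(sigma j), i.e. the digit of
   sigma_* y at position k is c_(sigma_inv k). *)
Definition pushZp (q : nat) (sigma_inv : nat -> nat) (y : Zpq q) : Zpq q :=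
  fun k => y (sigma_inv k).

(* rho_* on nonnegative integers: j = \sum_k c_k q^k  |->  \sum_k c_k q^(rho k).
   (For q >= 2 all digits of j at positions k > j vanish.) *)
Definition push_nat (q : nat) (rho : nat -> nat) (j : nat) : nat :=
  \sum_(k < j.+1) ((j %/ q ^ k) %% q) * q ^ (rho k).

(* binom(y, j) reduced mod p, y in Z_p: the binomial y |-> binom(y,j) is the
   continuous extension from the nonnegative integers, and reduction mod p is
   continuous into the discrete F_p, so binom(y,j) mod p is the eventual value
   of 'C(y mod q^n, j) mod p as n -> oo. *)
Definition eventual_binom (p q : nat) (y : Zpq q) (j : nat) (v : 'F_p) : Prop :=
  exists N, forall n, (N <= n)%N -> (('C(trunc y n, j))%:R)%R = v.

Definition binomZp (p q : nat) (y : Zpq q) (j : nat) : 'F_p :=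
  epsilon (inhabits 0%R) (@eventual_binom p q y j).

(* Writing y = \sum_k y_k q^k and j = \sum_k j_k q^k with q = p^m0, Lucas's
   theorem (iterated over the q-adic digits) gives
   binom(y mod q^n, j) = \prod_k binom(y_k, j_k) mod p for large n.
   The right-hand side is a product over finitely many digit positions, and
   rho_*^{-1} on y and rho_* on j move the digits y_(rho k) and j_k to the
   same position rho k, so both sides are the same finite product. *)
From mathcomp Require Import all_boot all_algebra.
From Stdlib Require Import ClassicalEpsilon.
Import GRing.Theory.

Definition qadic (q : nat) (c : nat -> nat) (n : nat) : nat :=
  \sum_(k < n) c k * q ^ k.

Definition digit (q j k : nat) : nat := (j %/ q ^ k) %% q.

Lemma big_ord_reindex_supp {R : Type} {idx : R} {op : Monoid.com_law idx}
    (F : nat -> R) {m n : nat} {f g : nat -> nat} :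
    cancel f g -> cancel g f ->
    (forall k, m <= k -> F k = idx) -> (forall k, k < m -> f k < n) ->
  \big[op/idx]_(i < n) F (g i) = \big[op/idx]_(i < m) F i.
Proof.
move=> fK gK F_supp f_lt.
rewrite -(big_mkord xpredT (F \o g)) -(big_mkord xpredT F).
rewrite (bigID (fun i => g i < m)) /= [X in op _ X]big1 ?Monoid.mulm1; last first.
  by move=> i; rewrite -leqNgt => /F_supp.
rewrite -big_filter -(big_map g xpredT F); apply/perm_big/uniq_perm.
- by rewrite (map_inj_uniq (can_inj gK)) filter_uniq // iota_uniq.
- exact: iota_uniq.
move=> k; rewrite mem_iota /= subn0; apply/mapP/idP => [[i]|k_lt].
  by rewrite mem_filter => /andP[? _] ->.
by exists (f k); rewrite ?fK // mem_filter fK k_lt mem_index_iota f_lt.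
Qed.

Lemma qadic_lt q c n : (forall k, c k < q) -> qadic q c n < q ^ n.
Proof.
move=> c_lt; elim: n => [|n IH]; first by rewrite /qadic big_ord0 expn0.
rewrite /qadic big_ord_recr /= -/(qadic q c n) expnSr.
apply: (@leq_trans (q ^ n + c n * q ^ n)); first by rewrite ltn_add2r.
by rewrite -mulSn mulnC leq_mul2l c_lt orbT.
Qed.

Lemma qadic_supp q c m n :
  (forall k, m <= k -> c k = 0) -> m <= n -> qadic q c n = qadic q c m.
Proof.
move=> c_supp le_mn; rewrite /qadic.
apply: (big_ord_reindex_supp (fun k => c k * q ^ k) (f := id) (g := id)) => //.
- by move=> k /c_supp ->.
- by move=> k /leq_trans; apply.
Qed.

Lemma qadic_digit q j n : qadic q (digit q j) n + q ^ n * (j %/ q ^ n) = j.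
Proof.
elim: n => [|n IH]; first by rewrite /qadic big_ord0 expn0 mul1n divn1.
rewrite /qadic big_ord_recr /= -/(qadic q (digit q j) n) -addnA -[RHS]IH.
congr (_ + _).
rewrite [in RHS](divn_eq (j %/ q ^ n) q) expnSr divnMA.
by rewrite mulnDr addnC -mulnA (mulnC q) (mulnC (digit q j n)).
Qed.

Lemma qadic_digit_small q j n : j < q ^ n -> qadic q (digit q j) n = j.
Proof. by move=> j_lt; rewrite -[RHS](qadic_digit q j n) divn_small ?muln0 ?addn0. Qed.

Lemma digit_lt q j k : 0 < q -> digit q j k < q.
Proof. exact: ltn_pmod. Qed.

Lemma digit_eq0 q j k : j < q ^ k -> digit q j k = 0.
Proof. by move=> j_lt; rewrite /digit divn_small ?mod0n. Qed.

Local Open Scope ring_scope.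

Lemma coef_XaddC1_exp (R : nzRingType) n k :
  (('X + 1) ^+ n : {poly R})`_k = ('C(n, k))%:R.
Proof.
elim: n k => [|n IH] [|k]; rewrite ?expr0 ?coefC ?bin0 //.
all: rewrite exprSr mulrDr mulr1 coefD coefMX !IH /=.
  by rewrite bin0 add0r.
by rewrite binS natrD addrC.
Qed.

Lemma lucas_pexp (R : comNzRingType) p e a b c d :
    p \in [pchar R] -> (a < p ^ e)%N -> (c < p ^ e)%N ->
  ('C(a + p ^ e * b, c + p ^ e * d))%:R = ('C(a, c))%:R * ('C(b, d))%:R :> R.
Proof.
move=> pcharR a_lt c_lt; set Q := (p ^ e)%N.
have Q_gt0 : (0 < Q)%N by rewrite expn_gt0 prime_gt0 ?(pcharf_prime pcharR).
have pcharQ : [pchar {poly R}].-nat Q.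
  by rewrite pnatX pnatE ?(pcharf_prime pcharR) // pchar_poly pcharR.
have frobenius_split : ('X + 1 : {poly R}) ^+ (a + Q * b)
    = ('X + 1) ^+ a * (('X + 1) ^+ b \Po 'X^Q).
  by rewrite exprD exprM (exprDn_pchar _ _ pcharQ) expr1n rmorphXn rmorphD /=
    comp_polyX rmorph1.
rewrite -coef_XaddC1_exp frobenius_split coefM.
rewrite (bigD1 (Ordinal (leq_addr (Q * d) c : c < (c + Q * d).+1)%N)) //=.
rewrite coef_XaddC1_exp coef_comp_poly_Xn // addKn dvdn_mulr // mulKn //.
rewrite coef_XaddC1_exp big1 ?addr0 // => i /eqP i_neq_c.
rewrite coef_comp_poly_Xn //; case: ifP => [Q_dvd|_]; last by rewrite mulr0.
have [i_le_a|a_lt_i] := leqP i a; last by rewrite coef_XaddC1_exp bin_small ?mul0r.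
(* Only i = c survives: i <= a < Q and Q | c + Q d - i force i = c mod Q. *)
exfalso; apply/i_neq_c/val_inj => /=.
have i_le : (i <= c + Q * d)%N by rewrite -ltnS.
move: Q_dvd; rewrite -eqn_mod_dvd // (modn_small (leq_ltn_trans i_le_a a_lt)).
by move=> /eqP<-; rewrite addnC mulnC modnMDl modn_small.
Qed.

Lemma lucas_qadic (R : comNzRingType) p e (c d : nat -> nat) n :
    p \in [pchar R] -> (forall k, c k < p ^ e)%N -> (forall k, d k < p ^ e)%N ->
  ('C(qadic (p ^ e) c n, qadic (p ^ e) d n))%:R
    = \prod_(k < n) ('C(c k, d k))%:R :> R.
Proof.
move=> pcharR c_lt d_lt; elim: n => [|n IH]; first by rewrite /qadic !big_ord0.
rewrite big_ord_recr /= -IH /qadic !big_ord_recr /= -!/(qadic _ _ n).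
rewrite -expnM ![(_ * p ^ _)%N]mulnC.
by rewrite lucas_pexp // expnM; apply: qadic_lt.
Qed.

Lemma binomZp_eventually p q (y : Zpq q) j (v : 'F_p) :
  @eventual_binom p q y j v -> binomZp p y j = v.
Proof.
move=> v_eventual; rewrite /binomZp.
have [N' eps_eq] := epsilon_spec (inhabits 0) _ (ex_intro _ v v_eventual).
have [N binom_eq] := v_eventual.
by rewrite -(eps_eq (maxn N N')) ?leq_maxr // binom_eq ?leq_maxl.
Qed.

Lemma binomZp_qadic p m0 (y : Zpq (p ^ m0)) (d : nat -> nat) m :
    prime p -> (forall k, d k < p ^ m0)%N -> (forall k, m <= k -> d k = 0)%N ->
  binomZp p y (qadic (p ^ m0) d m) = \prod_(k < m) ('C(y k, d k))%:R.
Proof.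
move=> p_prime d_lt d_supp; apply: binomZp_eventually; exists m => n le_mn.
rewrite -(@qadic_supp _ _ _ _ d_supp le_mn).
rewrite (@lucas_qadic _ p m0 (fun k => y k)) ?pchar_Fp //.
apply: (big_ord_reindex_supp (fun k => ('C(y k, d k))%:R) (f := id) (g := id)) => //.
- by move=> k /d_supp ->; rewrite bin0.
- by move=> k /leq_trans; apply.
Qed.

Theorem proposition7p3 (p m0 : nat) (hp : prime p) (hm0 : (0 < m0)%N)
    (rho rho_inv : nat -> nat) (hrho1 : cancel rho rho_inv) (hrho2 : cancel rho_inv rho)
    (j : nat) (y : Zpq (p ^ m0)) :
  binomZp p (pushZp rho y) j = binomZp p y (push_nat (p ^ m0) rho j).
Proof.
set q := (p ^ m0)%N.
have q_gt1 : (1 < q)%N by rewrite -(exp1n m0) ltn_exp2r ?prime_gt1.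
have q_gt0 := ltnW q_gt1.
have digit_supp k : (j < k)%N -> digit q j k = 0%N.
  by move=> lt_jk; apply/digit_eq0/(leq_trans (ltn_expl j q_gt1))/leq_pexp2l/ltnW.
pose M := (\max_(k < j.+1) (rho k).+1)%N.
have rho_lt k : (k < j.+1)%N -> (rho k < M)%N.
  by move=> k_lt; apply: (leq_bigmax (Ordinal k_lt)).
have pushed_supp k : (M <= k)%N -> digit q j (rho_inv k) = 0%N.
  move=> le_Mk; apply: digit_supp; rewrite ltnNge; apply/negP => /rho_lt.
  by rewrite hrho2 ltnNge le_Mk.
have -> : push_nat q rho j = qadic q (digit q j \o rho_inv) M.
  transitivity (\sum_(i < M) digit q j (rho_inv i) * q ^ rho (rho_inv i))%N.
    rewrite (big_ord_reindex_supp (fun k => digit q j k * q ^ rho k)%N hrho1 hrho2 _ rho_lt) //.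
    by move=> k /digit_supp ->.
  by apply: eq_bigr => i _; rewrite hrho2.
rewrite -{1}(qadic_digit_small q j j.+1 (ltnW (ltn_expl j.+1 q_gt1))).
rewrite !binomZp_qadic // => [|k|k]; try exact: digit_lt.
pose H k := ('C(y (rho k), digit q j k))%:R : 'F_p.
rewrite (eq_bigr (fun i : 'I_M => H (rho_inv i))) => [|i _]; last by rewrite /H /= hrho2.
rewrite (big_ord_reindex_supp H hrho1 hrho2 _ rho_lt) // => k /digit_supp.
by rewrite /H => ->; rewrite bin0.
Qed.
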